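(* Let $n\ge 3$ and let $DW_n$ be the double wheel graph. Then $$\chi'(DW_n)=\begin{cases}3(n+1) & \text{if } n \text{ is even},\\ 3n+7 & \text{if } n \text{ is odd}.\end{cases}$$
   Context: The double wheel graph $DW_n=2C_n+K_1$ is obtained from the disjoint union of two cycles $C_n$ by adding one new vertex adjacent to every vertex of both cycles. For a proper colouring $c:V(G)\to\{1,\dots,k\}$ of a graph $G$ (colour $c_i$ identified with the integer $i$), its colouring sum is $\sum_{i=1}^k i\,\theta(c_i)=\sum_{v\in V(G)} c(v)$, where $\theta(c_i)$ is the number of vertices receiving colour $c_i$. The $\chi$-chromatic sum $\chi'(G)$ is the minimum of the colouring sum over all proper colourings of $G$ using exactly $\chi(G)$ colours (the chromatic number), i.e. over all proper colourings $c:V(G)\to\{1,\dots,\chi(G)\}$. *)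

From mathcomp Require Import all_boot.
Set Implicit Arguments. Unset Strict Implicit. Unset Printing Implicit Defensive.

(* A proper k-colouring is c : T -> 'I_k with c x != c y on every edge;
   colour c_i is identified with the integer i, i.e. ordinal value i-1
   corresponds to colour (i-1).+1 = i. *)
Definition proper_col (T : finType) (e : rel T) (k : nat) (c : {ffun T -> 'I_k}) : bool :=
  [forall x, forall y, e x y ==> (c x != c y)].

Lemma proper_col_exists (T : finType) (e : rel T) (He : irreflexive e) :
  exists k, [exists c : {ffun T -> 'I_k}, proper_col e c].
Proof.
exists #|T|; apply/existsP; exists [ffun x => enum_rank x].
apply/forallP => x; apply/forallP => y; apply/implyP => exy.
rewrite !ffunE; apply/negP => /eqP /enum_rank_inj exy'.
by move: exy; rewrite exy' He.
Qed.

Definition chromatic_number (T : finType) (e : rel T) (He : irreflexive e) : nat :=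
  ex_minn (proper_col_exists He).

Lemma chi_col_exists (T : finType) (e : rel T) (He : irreflexive e) :
  exists s, [exists c : {ffun T -> 'I_(chromatic_number He)},
               proper_col e c && (s == \sum_(v : T) (c v).+1)].
Proof.
rewrite /chromatic_number; case: ex_minnP => k /existsP [c Hc] _.
exists (\sum_(v : T) (c v).+1); apply/existsP; exists c; by rewrite Hc eqxx.
Qed.

Definition chi_chromatic_sum (T : finType) (e : rel T) (He : irreflexive e) : nat :=
  ex_minn (chi_col_exists He).

(* Double wheel DW_n = 2C_n + K_1: vertices None (the hub) and Some (b, i),
   b : bool choosing one of the two cycles, i : 'I_n the position on it.
   Cycle edges join i and i+1 (mod n); the extra (i != j) guard only matters
   for the degenerate n = 1 and makes the relation irreflexive for all n. *)
Definition dw_adj (n : nat) : rel (option (bool * 'I_n)) :=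
  fun x y =>
    match x, y with
    | None, None => false
    | None, Some _ => true
    | Some _, None => true
    | Some (b, i), Some (b', j) =>
        [&& b == b', i != j &
            ((nat_of_ord j == i.+1 %% n) || (nat_of_ord i == j.+1 %% n))]
    end.
Arguments dw_adj n : clear implicits.

Lemma dw_adj_irr (n : nat) : irreflexive (dw_adj n).
Proof. move=> [[b i]|] //=; by rewrite !eqxx. Qed.
Arguments dw_adj_irr n : clear implicits.

From mathcomp Require Import all_boot zify.
Set Implicit Arguments. Unset Strict Implicit. Unset Printing Implicit Defensive.

(* The hub must get a colour h different from every rim colour, and each rim
   is a cycle properly coloured with the remaining colours.  Summing over the
   edges of a rim counts each vertex twice, so a lower bound s on the colour sum
   of every edge gives twice the rim sum at least n s.
   For even n three colours suffice: each rim alternates the two colours other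
   than h, and the total h + n (6 - h) is least for h = 3, namely 3n + 3.
   For odd n a rim cannot be 2-coloured (an alternating colouring would split
   the odd cycle into two classes of equal size), so four colours are needed.
   If the rim colours are x < y < z, then z occurs on each rim and, weighting
   its two edges by z + x instead of x + y, twice the rim sum is at least
   n (x + y) + 2 (z - y); over the four choices of h the total is at least
   3n + 7, attained by hub colour 4 and rims coloured 1, 2, 1, 2, ..., 1, 2, 3. *)

Section ChromaticCharacterisation.
Variables (T : finType) (e : rel T) (He : irreflexive e).

Lemma proper_col_neq k (c : {ffun T -> 'I_k}) x y :
  proper_col e c -> e x y -> c x != c y.
Proof. by move=> /forallP/(_ x)/forallP/(_ y)/implyP. Qed.

Lemma chromatic_numberE k :
  (exists c : {ffun T -> 'I_k}, proper_col e c) ->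
  (forall m (c : {ffun T -> 'I_m}), proper_col e c -> k <= m) ->
  chromatic_number He = k.
Proof.
move=> [c0 c0_proper] k_min; rewrite /chromatic_number.
case: ex_minnP => m /existsP[c c_proper] m_min.
apply/eqP; rewrite eqn_leq (k_min _ c c_proper) andbT.
by apply: m_min; apply/existsP; exists c0.
Qed.

Lemma chi_chromatic_sumE k s :
  chromatic_number He = k ->
  (exists2 c : {ffun T -> 'I_k}, proper_col e c & \sum_v (c v).+1 = s) ->
  (forall c : {ffun T -> 'I_k}, proper_col e c -> s <= \sum_v (c v).+1) ->
  chi_chromatic_sum He = s.
Proof.
move=> chiE [c0 c0_proper c0_sum] s_min; rewrite /chi_chromatic_sum.
case: ex_minnP => t /existsP[c /andP[c_proper /eqP->]] t_min.
move: c c_proper t_min; rewrite chiE => c c_proper t_min.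
apply/eqP; rewrite eqn_leq s_min // andbT.
by apply: t_min; apply/existsP; exists c0; rewrite c0_proper c0_sum eqxx.
Qed.

End ChromaticCharacterisation.

Section CycleSums.
Variable n : nat.

Lemma ordS_val (i : 'I_n) : nat_of_ord (ordS i) = if i.+1 < n then i.+1 else 0.
Proof.
rewrite /=; case: ltngtP => [lt|gt|->]; first by rewrite modn_small.
- by have := ltn_ord i; lia.
- by rewrite modnn.
Qed.

Lemma sum_le_consecutive (g h : 'I_n -> nat) :
  (forall i, g i + g (ordS i) <= h i + h (ordS i)) -> \sum_i g i <= \sum_i h i.
Proof.
move=> gh; rewrite -(leq_pmul2l (isT : 0 < 2)).
have pairsE (F : 'I_n -> nat) : 2 * \sum_i F i = \sum_i (F i + F (ordS i)).
  by rewrite big_split /= (reindex_inj (@ordS_inj n)) /= mul2n addnn.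
by rewrite !pairsE; apply: leq_sum.
Qed.

Lemma alternating_cycle_even (b : 'I_n -> bool) :
  (forall i, b (ordS i) = ~~ b i) -> ~~ odd n.
Proof.
move=> b_alt; set A := [set i | b i].
have compA : ~: A = @ordS n @^-1: A by apply/setP => i; rewrite !inE b_alt.
have := cardsC A; rewrite compA card_preimset ?card_ord; last exact: ordS_inj.
by move=> <-; rewrite addnn odd_double.
Qed.

Lemma cycle_sum_ge (f : 'I_n -> nat) s :
  (forall i, s <= f i + f (ordS i)) -> n * s <= 2 * \sum_i f i.
Proof.
move=> pair_ge; rewrite big_distrr -{1}[n]card_ord -sum_nat_const /=.
by apply: sum_le_consecutive => i; have := pair_ge i; lia.
Qed.

Variable f : 'I_n -> nat.
Hypothesis f_proper : forall i, f i != f (ordS i).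

Lemma odd_cycle_third_colour p q : odd n -> exists i, (f i != p) && (f i != q).
Proof.
move=> n_odd; apply/existsP; apply: contraLR n_odd => /existsPn two_colours.
apply: (@alternating_cycle_even (fun i => f i == p)) => i.
have := f_proper i; have := two_colours i; have := two_colours (ordS i).
by rewrite !negb_and !negbK; lia.
Qed.

Lemma odd_cycle_sum_ge a b c : odd n -> a < b < c ->
  (forall i, [|| f i == a, f i == b | f i == c]) ->
  n * (a + b) + 2 * (c - b) <= 2 * \sum_i f i.
Proof.
move=> n_odd abc colours.
have [i0 /andP[fi0a fi0b]] := odd_cycle_third_colour a b n_odd.
have fi0c : f i0 = c by have := colours i0; lia.
pose w i := a + b + 2 * (c - b) * (f i == c).
apply: (@leq_trans (\sum_i w i)).
  rewrite big_split sum_nat_const card_ord /= leq_add2l (bigD1 i0) //=.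
  by rewrite fi0c eqxx muln1 leq_addr.
rewrite big_distrr; apply: sum_le_consecutive => i.
have := f_proper i; have := colours i; have := colours (ordS i); rewrite /w /=.
by case: (f i =P c); case: (f (ordS i) =P c); lia.
Qed.

End CycleSums.

Lemma sum_dw n (F : option (bool * 'I_n) -> nat) :
  \sum_v F v = F None + (\sum_i F (Some (true, i)) + \sum_i F (Some (false, i))).
Proof.
rewrite (bigD1 None) //= (reindex_omap Some id) => [|[]//].
rewrite (eq_bigl xpredT) => [|p]; last by rewrite eqxx.
rewrite (eq_bigr (fun p => F (Some (p.1, p.2)))) => [|[]//].
by rewrite -(pair_big xpredT xpredT (fun b i => F (Some (b, i)))) big_bool.
Qed.

Lemma dw_adj_ordS n (b : bool) (i : 'I_n) :
  1 < n -> dw_adj n (Some (b, i)) (Some (b, ordS i)).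
Proof.
move=> n_gt1; rewrite /= eqxx /= eqxx andbT.
by apply/eqP => /(congr1 (@nat_of_ord n)); rewrite ordS_val; case: ifP; lia.
Qed.

Lemma dw_adj_cycle n b b' (i j : 'I_n) :
  dw_adj n (Some (b, i)) (Some (b', j)) -> j = ordS i \/ i = ordS j.
Proof. by case/and3P=> _ _ /orP[] /eqP ij; [left | right]; apply: val_inj. Qed.

Section DoubleWheelColourBounds.
Variables (n k : nat) (c : {ffun option (bool * 'I_n) -> 'I_k}).
Hypotheses (n_ge3 : 3 <= n) (c_proper : proper_col (dw_adj n) c).

Let hub := (c None).+1.
Let rim (b : bool) (i : 'I_n) := (c (Some (b, i))).+1.

Lemma rim_neq_hub b i : rim b i != hub.
Proof. by rewrite eqSS; apply: proper_col_neq c_proper _. Qed.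

Lemma rim_proper b i : rim b i != rim b (ordS i).
Proof. by rewrite eqSS; apply: proper_col_neq c_proper _; apply: dw_adj_ordS; lia. Qed.

Lemma dw_colours_ge3 : 3 <= k.
Proof.
have i0 : 'I_n := Ordinal (leq_trans (isT : 0 < 3) n_ge3).
have := rim_proper true i0; have := rim_neq_hub true i0.
have := rim_neq_hub true (ordS i0); have := ltn_ord (c None).
have := ltn_ord (c (Some (true, i0))); have := ltn_ord (c (Some (true, ordS i0))).
rewrite /rim /hub; lia.
Qed.

Lemma dw_colours_ge4 : odd n -> 4 <= k.
Proof.
move=> n_odd; have i0 : 'I_n := Ordinal (leq_trans (isT : 0 < 3) n_ge3).
have [j /andP[rim_j_neq0 rim_j_neq1]] :=
  odd_cycle_third_colour (rim_proper true) (rim true i0) (rim true (ordS i0)) n_odd.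
have := rim_proper true i0; have := rim_neq_hub true i0.
have := rim_neq_hub true (ordS i0); have := rim_neq_hub true j.
have := ltn_ord (c None); have := ltn_ord (c (Some (true, j))).
have := ltn_ord (c (Some (true, i0))); have := ltn_ord (c (Some (true, ordS i0))).
move: rim_j_neq0 rim_j_neq1; rewrite /rim /hub; lia.
Qed.

Lemma dw_colour_sum_ge_even : k = 3 -> 3 * (n + 1) <= \sum_v (c v).+1.
Proof.
move=> k3; rewrite sum_dw -/hub.
have rim_sum_ge b : n * (6 - hub) <= 2 * \sum_i rim b i.
  apply: cycle_sum_ge => i.
  have := rim_proper b i; have := rim_neq_hub b i; have := rim_neq_hub b (ordS i).
  have := ltn_ord (c None); have := ltn_ord (c (Some (b, i))).
  have := ltn_ord (c (Some (b, ordS i))); rewrite /rim /hub; lia.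
have := rim_sum_ge true; have := rim_sum_ge false; have := ltn_ord (c None).
rewrite /hub /rim; case: (nat_of_ord (c None)) => [|[|[|]]] /=; lia.
Qed.

Lemma dw_colour_sum_ge_odd : k = 4 -> odd n -> 3 * n + 7 <= \sum_v (c v).+1.
Proof.
move=> k4 n_odd; rewrite sum_dw -/hub.
have rim_sum_ge x y z : x < y < z ->
    (forall u, 0 < u <= 4 -> u != hub -> [|| u == x, u == y | u == z]) ->
    forall b, n * (x + y) + 2 * (z - y) <= 2 * \sum_i rim b i.
  move=> xyz others b; apply: (odd_cycle_sum_ge (rim_proper b)) => // i.
  by apply: others; [rewrite -k4; exact: ltn_ord | exact: rim_neq_hub].
have : c None < 4 by rewrite -k4.
rewrite /hub in rim_sum_ge *.
case: (nat_of_ord (c None)) rim_sum_ge => [|[|[|[|]]]] //= rim_sum_ge _.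
- have bound := rim_sum_ge 2 3 4 isT (fun u => ltac:(lia)).
  by have := bound true; have := bound false; rewrite /rim; lia.
- have bound := rim_sum_ge 1 3 4 isT (fun u => ltac:(lia)).
  by have := bound true; have := bound false; rewrite /rim; lia.
- have bound := rim_sum_ge 1 2 4 isT (fun u => ltac:(lia)).
  by have := bound true; have := bound false; rewrite /rim; lia.
- have bound := rim_sum_ge 1 2 3 isT (fun u => ltac:(lia)).
  by have := bound true; have := bound false; rewrite /rim; lia.
Qed.

End DoubleWheelColourBounds.

Definition dw_colouring n k (hub : 'I_k) (g : 'I_n -> 'I_k) :
  {ffun option (bool * 'I_n) -> 'I_k} :=
  [ffun v => if v is Some (_, i) then g i else hub].

Lemma dw_colouring_proper n k (hub : 'I_k) (g : 'I_n -> 'I_k) :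
  (forall i, g i != hub) -> (forall i, g i != g (ordS i)) ->
  proper_col (dw_adj n) (dw_colouring hub g).
Proof.
move=> g_hub g_proper; apply/forallP => -[[b i]|]; apply/forallP => -[[b' j]|];
  rewrite !ffunE; apply/implyP => //.
- by case/dw_adj_cycle => ->; rewrite // eq_sym.
- by rewrite eq_sym.
Qed.

Lemma dw_colouring_sum n k (hub : 'I_k) (g : 'I_n -> 'I_k) :
  \sum_v (dw_colouring hub g v).+1 = hub.+1 + 2 * \sum_i (g i).+1.
Proof.
rewrite sum_dw !ffunE mul2n -addnn.
by congr (_ + (_ + _)); apply: eq_bigr => i _; rewrite ffunE.
Qed.

Lemma sum_odd_succ m : \sum_(i < m) (odd i).+1 = m./2 + m.
Proof.
elim: m => [|m IHm]; first by rewrite big_ord0.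
rewrite big_ord_recr /= IHm uphalf_half; case: (odd m) => /=; lia.
Qed.

Lemma dw_even_colouring n : 3 <= n -> ~~ odd n ->
  exists2 c : {ffun option (bool * 'I_n) -> 'I_3},
    proper_col (dw_adj n) c & \sum_v (c v).+1 = 3 * (n + 1).
Proof.
move=> n_ge3 n_even; pose g (i : 'I_n) : 'I_3 := inord (odd i).
have gE i : nat_of_ord (g i) = odd i by rewrite inordK //; case: odd.
exists (dw_colouring ord_max g).
  apply: dw_colouring_proper => i; apply/eqP => /(congr1 (@nat_of_ord _)).
    by rewrite gE; case: odd.
  rewrite !gE ordS_val; case: ifP => [_ /=|i_not_lt]; first by case: odd.
  have iE : i.+1 = n by have := ltn_ord i; lia.
  by move: n_even; rewrite -{1}iE /=; case: odd.
rewrite dw_colouring_sum (eq_bigr _ (fun i _ => congr1 S (gE i))) sum_odd_succ /=.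
by have := odd_double_half n; rewrite (negbTE n_even); lia.
Qed.

Lemma dw_odd_colouring n : 3 <= n -> odd n ->
  exists2 c : {ffun option (bool * 'I_n) -> 'I_4},
    proper_col (dw_adj n) c & \sum_v (c v).+1 = 3 * n + 7.
Proof.
move=> n_ge3 n_odd; pose g (i : 'I_n) : 'I_4 := inord (if i.+1 == n then 2 else odd i).
have gE i : nat_of_ord (g i) = if i.+1 == n then 2 else odd i.
  by rewrite inordK //; case: ifP => _ //; case: odd.
exists (dw_colouring ord_max g).
  apply: dw_colouring_proper => i; apply/eqP => /(congr1 (@nat_of_ord _)).
    by rewrite gE; case: ifP => _ //; case: odd.
  rewrite !gE ordS_val; case: ltnP => [i_lt|i_last].
    by rewrite ltn_eqF //=; case: ifP => _; case: odd.
  have iE : i.+1 = n by have := ltn_ord i; lia.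
  by rewrite iE eqxx; case: eqP => // n1; lia.
rewrite dw_colouring_sum; case: n n_ge3 n_odd g gE => // m m_ge2.
rewrite oddS => /negbTE m_even g gE.
rewrite big_ord_recr /= gE eqxx.
rewrite (eq_bigr (fun i : 'I_m => (odd i).+1)) => [|i _]; last first.
  by rewrite gE /= eqSS ltn_eqF.
by rewrite sum_odd_succ; have := odd_double_half m; rewrite m_even; lia.
Qed.

Theorem proposition2p1 (n : nat) (hn : 3 <= n) :
  chi_chromatic_sum (dw_adj_irr n) = (if odd n then 3 * n + 7 else 3 * (n + 1)).
Proof.
case: ifP => n_odd.
- have [c c_proper c_sum] := dw_odd_colouring hn n_odd.
  have chiE : chromatic_number (dw_adj_irr n) = 4.
    apply: chromatic_numberE => [|m c' c'_proper]; first by exists c.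
    exact: dw_colours_ge4 hn c'_proper n_odd.
  apply: (chi_chromatic_sumE chiE) => [|c' c'_proper]; first by exists c.
  exact: dw_colour_sum_ge_odd hn c'_proper erefl n_odd.
- have [c c_proper c_sum] := dw_even_colouring hn (negbT n_odd).
  have chiE : chromatic_number (dw_adj_irr n) = 3.
    apply: chromatic_numberE => [|m c' c'_proper]; first by exists c.
    exact: dw_colours_ge3 hn c'_proper.
  apply: (chi_chromatic_sumE chiE) => [|c' c'_proper]; first by exists c.
  exact: dw_colour_sum_ge_even hn c'_proper erefl.
Qed.
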